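(* Consider the execution of Greedy Dual on any MPMD or MBPMD instance. At every time $\tau$, the values $(y_S(\tau))_S$ form a feasible solution of the dual program for the requests that have arrived by time $\tau$. That is, $y_S(\tau)\ge 0$ for all $S$, and for every edge $e$ between two requests that have arrived by time $\tau$, $\sum_{S:\,e\in\delta(S)} y_S(\tau)\le\mathrm{cost}(e)$.
   Context: Problem (MPMD / MBPMD). Let $(\mathcal{X},\mathrm{dist})$ be a metric space. An instance consists of $2m$ requests $u_1,\dots,u_{2m}$. Each request $u$ is a triple $(\mathrm{pos}(u),\mathrm{atime}(u),\mathrm{sgn}(u))$, where $\mathrm{pos}(u)\in\mathcal{X}$ is its location and $\mathrm{atime}(u)\ge0$ is its arrival time, with arrival times nondecreasing. In MPMD, $\mathrm{sgn}(u)=0$ for all requests. In MBPMD, exactly $m$ requests have sign $+1$ and $m$ have sign $-1$. At time $\tau$, an algorithm may match two arrived, unmatched requests $u,v$ with $\mathrm{sgn}(u)=-\mathrm{sgn}(v)$, at cost $\mathrm{dist}(\mathrm{pos}(u),\mathrm{pos}(v))$ (connection cost) plus $(\tau-\mathrm{atime}(u))+(\tau-\mathrm{atime}(v))$ (waiting costs). All requests must eventually be matched. Notation. Edges are unordered pairs $\{u,v\}$ of distinct requests with $\mathrm{sgn}(u)=-\mathrm{sgn}(v)$. For a set $S$ of requests, $\delta(S)$ is the set of edges with exactly one endpoint in $S$. In MPMD, $\mathrm{sur}(S)=|S|\bmod 2$; in MBPMD, $\mathrm{sur}(S)=|\sum_{u\in S}\mathrm{sgn}(u)|$. For an edge $e=(u,v)$,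 $\mathrm{cost}(e)=\mathrm{dist}(\mathrm{pos}(u),\mathrm{pos}(v))+|\mathrm{atime}(u)-\mathrm{atime}(v)|$. Algorithm Greedy Dual (GD). GD maintains a dual variable $y_S\ge0$ for every set $S$ of already-arrived requests; $y_S(\tau)$ denotes its value at time $\tau$. It also maintains a partition of the arrived requests into active sets, with $\mathcal{A}(u)$ denoting the active set containing $u$. An active set is growing if it contains at least one free request, and non-growing otherwise. - When a request $u$ arrives, $\mathcal{A}(u)\leftarrow\{u\}$ becomes a new active set, and $y_S\leftarrow 0$ for every new set $S$ containing $u$. - Tight-constraint event: while there is an edge $e=(u,v)$ between arrived requests with $\mathcal{A}(u)\neq\mathcal{A}(v)$ and $\sum_{S:\,e\in\delta(S)}y_S=\mathrm{cost}(e)$, GD does the following. It merges the two sets: $S=\mathcal{A}(u)\cup\mathcal{A}(v)$ becomes active and $\mathcal{A}(w)\leftarrow S$ for all $w\in S$, while $\mathcal{A}(u)$ and $\mathcal{A}(v)$ become inactive. It marks the edge $e$. Then, while there are free $u',v'\in S$ with $\mathrm{sgn}(u')=-\mathrm{sgn}(v')$, it matches $u'$ with $v'$ at the current time. - At all other times, $y_S$ increases continuously at rate $1$ (the same rate as time) for every active growing set $S$; all other dual variables stay constant. *)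

From HB Require Import structures.
From mathcomp Require Import all_boot all_order all_algebra.
Set Implicit Arguments. Unset Strict Implicit. Unset Printing Implicit Defensive.
Import Order.TTheory GRing.Theory Num.Theory.
Local Open Scope ring_scope.

Definition is_metric (R : realFieldType) (X : Type) (dist : X -> X -> R) : Prop :=
  (forall x y, 0 <= dist x y) /\
  (forall x y, dist x y = 0 <-> x = y) /\
  (forall x y, dist x y = dist y x) /\
  (forall x y z, dist x z <= dist x y + dist y z).

(* Valid instance with 2m requests indexed by 'I_(2*m): arrival times are
   nonnegative and nondecreasing; signs are either all 0 (MPMD) or
   all +-1 with exactly m of sign +1 (MBPMD). *)
Definition valid_instance (R : realFieldType) (m : nat)
    (atime : 'I_(2 * m) -> R) (sgn : 'I_(2 * m) -> int) : Prop :=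
  (forall u, 0 <= atime u) /\
  (forall u v : 'I_(2 * m), (u <= v)%N -> atime u <= atime v) /\
  ((forall u, sgn u = 0) \/
   ((forall u, sgn u = 1 \/ sgn u = -1) /\ #|[set u | sgn u == 1]| = m)).

Record gd_state (R : realFieldType) (n : nat) := GDState {
  st_time : R;
  st_arr  : {set 'I_n};
  st_act  : 'I_n -> {set 'I_n};       (* A(u), meaningful for arrived u *)
  st_free : {set 'I_n};               (* arrived, still unmatched requests *)
  st_y    : {set 'I_n} -> R           (* dual variables (0 on sets not yet created) *)
}.

Section GD.
Variables (R : realFieldType) (X : Type) (dist : X -> X -> R) (n : nat)
          (pos : 'I_n -> X) (atime : 'I_n -> R) (sgn : 'I_n -> int).

Definition is_edge (u v : 'I_n) : bool := (u != v) && (sgn u == - sgn v).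

Definition cost (u v : 'I_n) : R := dist (pos u) (pos v) + `|atime u - atime v|.

Definition dual_load (arr : {set 'I_n}) (y : {set 'I_n} -> R) (u v : 'I_n) : R :=
  \sum_(S : {set 'I_n} | (S \subset arr) && ((u \in S) != (v \in S))) y S.

Definition growing (s : gd_state R n) (S : {set 'I_n}) : bool :=
  [exists w, (w \in st_arr s) && (st_act s w == S)] && (S :&: st_free s != set0).

Definition y_at (s : gd_state R n) (t : R) : {set 'I_n} -> R :=
  fun S => st_y s S + (if growing s S then t - st_time s else 0).

Definition tight_at (s : gd_state R n) (t : R) : Prop :=
  exists u v, [/\ u \in st_arr s, v \in st_arr s, is_edge u v,
    st_act s u != st_act s v &
    dual_load (st_arr s) (y_at s t) u v = cost u v].

Definition quiescent (s : gd_state R n) : Prop :=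
  forall u v, u \in st_arr s -> v \in st_arr s -> u \in st_free s -> v \in st_free s ->
    is_edge u v -> st_act s u = st_act s v -> False.

Inductive gd_reach : gd_state R n -> Prop :=
| gd_init : gd_reach (GDState 0 set0 (fun _ => set0) set0 (fun _ => 0))
| gd_arrive s u :
    gd_reach s -> quiescent s -> u \notin st_arr s -> st_time s = atime u ->
    gd_reach (GDState (st_time s) (u |: st_arr s)
                (fun w => if w == u then [set u] else st_act s w)
                (u |: st_free s) (st_y s))
| gd_merge s u v :
    gd_reach s -> quiescent s -> u \in st_arr s -> v \in st_arr s -> is_edge u v ->
    st_act s u != st_act s v ->
    dual_load (st_arr s) (st_y s) u v = cost u v ->
    let S := st_act s u :|: st_act s v in
    gd_reach (GDState (st_time s) (st_arr s)
                (fun w => if w \in S then S else st_act s w)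
                (st_free s) (st_y s))
| gd_match s u v :
    gd_reach s -> u \in st_arr s -> v \in st_arr s -> u \in st_free s -> v \in st_free s ->
    is_edge u v -> st_act s u = st_act s v ->
    gd_reach (GDState (st_time s) (st_arr s) (st_act s)
                (st_free s :\ u :\ v) (st_y s))
| gd_grow s t :
    gd_reach s -> quiescent s -> st_time s < t ->
    (forall u, u \notin st_arr s -> t <= atime u) ->
    (forall t', st_time s <= t' -> t' < t -> ~ tight_at s t') ->
    gd_reach (GDState t (st_arr s) (st_act s) (st_free s) (y_at s t)).

End GD.

From HB Require Import structures.
From mathcomp Require Import all_boot all_order all_algebra.
Import Order.TTheory GRing.Theory Num.Theory.
Local Open Scope ring_scope.

(* Feasibility is proved together with a stronger invariant: the duals of the
   sets containing an arrived request [v] sum to at most its waiting time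
   [tau - atime v].  Growth keeps this because [v] lies in exactly one active
   set; an arrival keeps every edge constraint because a set separating the
   new request [u] from [v] must contain [v] (no set contains [u] yet), and
   [atime u - atime v <= cost u v].  During growth a constraint between two
   different active sets increases linearly and GD stops as soon as one
   becomes tight, while a constraint inside one active set does not move. *)

Lemma affine_le_of_no_crossing (R : realFieldType) (L0 c C t0 t : R) :
  L0 <= C -> 0 <= c -> t0 < t ->
  (forall t', t0 <= t' -> t' < t -> L0 + (t' - t0) * c != C) ->
  L0 + (t - t0) * c <= C.
Proof.
move=> le_L0C c_ge0 lt_t0t no_cross; rewrite leNgt; apply/negP => lt_Ct.
have {le_L0C} lt_L0C : L0 < C.
  rewrite lt_neqAle le_L0C andbT.
  by have := no_cross t0 (lexx _) lt_t0t; rewrite subrr mul0r addr0.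
have c_gt0 : 0 < c.
  rewrite lt_neqAle c_ge0 andbT; apply/eqP => c0.
  by move: lt_Ct; rewrite -c0 mulr0 addr0 ltNge ltW.
set t' := t0 + (C - L0) / c.
have t'_t0 : t' - t0 = (C - L0) / c by rewrite addrC addKr.
have le_t0t' : t0 <= t' by rewrite lerDl divr_ge0 ?subr_ge0 ?ltW.
have lt_t't : t' < t by rewrite -ltrBrDl ltr_pdivrMr // ltrBlDl.
by move/eqP: (no_cross t' le_t0t' lt_t't); rewrite t'_t0 divfK ?gt_eqF // addrC subrK.
Qed.

Section GreedyDualInvariant.
Variables (R : realFieldType) (X : Type) (dist : X -> X -> R) (n : nat)
          (pos : 'I_n -> X) (atime : 'I_n -> R) (sgn : 'I_n -> int).
Hypothesis dist_ge0 : forall x y, 0 <= dist x y.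

Implicit Types (A B S : {set 'I_n}) (y : {set 'I_n} -> R) (s : gd_state R n).

Definition supported A y := forall S, ~~ (S \subset A) -> y S = 0.

Definition active_partition A (act : 'I_n -> {set 'I_n}) :=
  forall w x, w \in A -> (x \in act w) = (x \in A) && (act x == act w).

Definition vertex_load y (v : 'I_n) := \sum_(S : {set 'I_n} | v \in S) y S.

Lemma supported_subset A B y : A \subset B -> supported A y -> supported B y.
Proof.
move=> sAB supp S nSB; apply: supp; apply: contra nSB => sSA.
exact: subset_trans sAB.
Qed.

Lemma supported_notin {A y u S} : supported A y -> u \notin A -> u \in S -> y S = 0.
Proof. by move=> supp uA uS; apply: supp; apply: contraNN uA => /subsetP; apply. Qed.

Lemma dual_load_supported A y u v : supported A y ->
  dual_load A y u v = \sum_(S : {set 'I_n} | (u \in S) != (v \in S)) y S.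
Proof.
move=> supp; symmetry; rewrite (bigID (fun S => S \subset A)) /=.
rewrite [X in _ + X]big1 ?addr0; last by move=> S /andP[_ /supp].
by apply: eq_bigl => S; rewrite andbC.
Qed.

Lemma dual_loadC A y u v : dual_load A y u v = dual_load A y v u.
Proof. by apply: eq_bigl => S; rewrite eq_sym. Qed.

Lemma atime_gap_le_cost u v : `|atime u - atime v| <= cost dist pos atime u v.
Proof. by rewrite /cost lerDr. Qed.

Lemma dual_load_y_at A s t u v :
  dual_load A (y_at s t) u v = dual_load A (st_y s) u v +
    (t - st_time s) * \sum_(S : {set 'I_n} | (S \subset A) && ((u \in S) != (v \in S)))
                        (if growing s S then 1 else 0).
Proof.
rewrite /dual_load /y_at big_split /= mulr_sumr; congr (_ + _).
by apply: eq_bigr => S _; case: (growing s S); rewrite ?mulr1 ?mulr0.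
Qed.

Lemma dual_load_fresh {A y u} v : u \notin A -> supported A y ->
  (forall S, 0 <= y S) -> dual_load (u |: A) y u v <= vertex_load y v.
Proof.
move=> uA supp y_ge0; rewrite dual_load_supported; last first.
  by apply: supported_subset supp; apply: subsetUr.
rewrite [X in X <= _]big_mkcond [X in _ <= X]big_mkcond /=.
apply: ler_sum => S _; case uS: (u \in S); last by case: (v \in S).
by rewrite (supported_notin supp uA uS); case: ifP; case: ifP.
Qed.

Section ActivePartition.
Variables (A : {set 'I_n}) (act : 'I_n -> {set 'I_n}).
Hypothesis partA : active_partition A act.

Lemma mem_act {w} : w \in A -> w \in act w.
Proof. by move=> wA; rewrite partA // wA eqxx. Qed.

Lemma act_sub {w x} : w \in A -> x \in act w -> x \in A.
Proof. by move=> wA; rewrite partA // => /andP[]. Qed.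

Lemma act_eq {w x} : w \in A -> x \in act w -> act x = act w.
Proof. by move=> wA; rewrite partA // => /andP[_ /eqP]. Qed.

Lemma active_partition_arrive u : u \notin A ->
  active_partition (u |: A) (fun w => if w == u then [set u] else act w).
Proof.
move=> uA w x /setU1P[->|wA].
  rewrite eqxx in_set1; have [->|xu] := eqVneq x u; first by rewrite eqxx setU11.
  rewrite in_setU1 (negbTE xu) /=; case xA: (x \in A) => //=.
  by apply/esym/eqP => act_x; move: (mem_act xA); rewrite act_x in_set1 (negbTE xu).
have /negbTE -> : w != u by apply: contraNneq uA => <-.
rewrite in_setU1; have [->|xu] := eqVneq x u => //=; last exact: partA.
have /negbTE -> : u \notin act w by apply: contra uA; apply: act_sub.
apply/esym/eqP => act_w; move: (mem_act wA); rewrite -act_w in_set1 => /eqP wu.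
by rewrite -wu wA in uA.
Qed.

Lemma active_partition_merge u v : u \in A -> v \in A ->
  let S := act u :|: act v in
  active_partition A (fun w => if w \in S then S else act w).
Proof.
move=> uA vA S.
have SA x : x \in S -> x \in A by case/setUP; [apply: act_sub uA | apply: act_sub vA].
have act_S w x : w \in A -> x \in act w -> x \in S -> w \in S.
  move=> wA xw; have wx : w \in act x by rewrite (act_eq wA xw) mem_act.
  by case/setUP => xS; rewrite /S in_setU -?(act_eq uA xS) -?(act_eq vA xS) wx ?orbT.
move=> w x wA; case wS: (w \in S); case xS: (x \in S).
- by rewrite SA // eqxx.
- case xA: (x \in A); rewrite ?andbF //=.
  by apply/esym/eqP => S_x; move: xS; rewrite -S_x mem_act.
- have /negbTE -> : S != act w by apply: contraFneq wS => ->; apply: mem_act.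
  by rewrite andbF; apply: contraFF wS => xw; apply: act_S xw xS.
- exact: partA.
Qed.

End ActivePartition.

Arguments mem_act {A act} partA {w}.
Arguments act_sub {A act} partA {w x}.
Arguments act_eq {A act} partA {w x}.

Record gd_invariant s : Prop := GDInvariant {
  inv_partition : active_partition (st_arr s) (st_act s);
  inv_supported : supported (st_arr s) (st_y s);
  inv_y_ge0 : forall S, 0 <= st_y s S;
  inv_vertex : forall v, v \in st_arr s -> vertex_load (st_y s) v <= st_time s - atime v;
  inv_edge : forall u v, u \in st_arr s -> v \in st_arr s -> is_edge sgn u v ->
    dual_load (st_arr s) (st_y s) u v <= cost dist pos atime u v }.

Lemma gd_invariant_init :
  gd_invariant (GDState 0 set0 (fun _ => set0) set0 (fun _ => 0)).
Proof. by split => //= [w x|v|u v]; rewrite in_set0. Qed.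

Lemma gd_invariant_arrive s u : gd_invariant s -> u \notin st_arr s ->
  st_time s = atime u ->
  gd_invariant (GDState (st_time s) (u |: st_arr s)
                  (fun w => if w == u then [set u] else st_act s w)
                  (u |: st_free s) (st_y s)).
Proof.
case=> partA supp y_ge0 vertex edge uA time_u.
have supp' : supported (u |: st_arr s) (st_y s).
  by apply: supported_subset supp; apply: subsetUr.
split => //=.
- exact: active_partition_arrive.
- move=> v /setU1P[->|vA]; last exact: vertex.
  by rewrite /vertex_load -time_u subrr big1 // => S; apply: supported_notin supp uA.
move=> a b /setU1P[->|aA] /setU1P[->|bA] ab.
- by move: ab; rewrite /is_edge eqxx.
- apply: le_trans (dual_load_fresh _ uA supp y_ge0) _.
  apply: le_trans (vertex b bA) _; rewrite time_u.
  exact: le_trans (ler_norm _) (atime_gap_le_cost _ _).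
- rewrite dual_loadC; apply: le_trans (dual_load_fresh _ uA supp y_ge0) _.
  apply: le_trans (vertex a aA) _; rewrite time_u.
  by apply: le_trans (atime_gap_le_cost a u); rewrite distrC ler_norm.
- by rewrite dual_load_supported // -(dual_load_supported _ _ _ _ supp) edge.
Qed.

Lemma gd_invariant_merge s u v : gd_invariant s -> u \in st_arr s -> v \in st_arr s ->
  let S := st_act s u :|: st_act s v in
  gd_invariant (GDState (st_time s) (st_arr s)
                  (fun w => if w \in S then S else st_act s w)
                  (st_free s) (st_y s)).
Proof. by case=> *; split => //=; apply: active_partition_merge. Qed.

Lemma gd_invariant_match s u v : gd_invariant s ->
  gd_invariant (GDState (st_time s) (st_arr s) (st_act s)
                  (st_free s :\ u :\ v) (st_y s)).
Proof. by case. Qed.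

Lemma growing_act {s S v} : active_partition (st_arr s) (st_act s) ->
  v \in st_arr s -> growing s S -> v \in S -> S = st_act s v.
Proof.
move=> partA vA /andP[/existsP[w /andP[wA /eqP <-]] _] vw.
by rewrite (act_eq partA wA vw).
Qed.

Lemma growing_sub {s S} : active_partition (st_arr s) (st_act s) ->
  growing s S -> S \subset st_arr s.
Proof.
move=> partA /andP[/existsP[w /andP[wA /eqP <-]] _].
by apply/subsetP => x; apply: act_sub.
Qed.

Lemma gd_invariant_grow s t : gd_invariant s -> st_time s < t ->
  (forall t', st_time s <= t' -> t' < t -> ~ tight_at dist pos atime sgn s t') ->
  gd_invariant (GDState t (st_arr s) (st_act s) (st_free s) (y_at s t)).
Proof.
case=> partA supp y_ge0 vertex edge lt_st no_tight.
have dt_gt0 : 0 < t - st_time s by rewrite subr_gt0.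
split => //=.
- move=> S nSA; rewrite /y_at supp // add0r.
  by case: ifP => // /(growing_sub partA); rewrite (negbTE nSA).
- by move=> S; rewrite /y_at addr_ge0 //; case: ifP => // _; apply: ltW.
- move=> v vA; rewrite /vertex_load /y_at big_split /=.
  have -> : t - atime v = (st_time s - atime v) + (t - st_time s).
    by rewrite [RHS]addrC addrA subrK.
  rewrite lerD ?vertex //.
  rewrite (bigD1 (st_act s v)) ?(mem_act partA) //= big1 ?addr0.
    by case: ifP => // _; apply: ltW.
  move=> S /andP[vS S_v]; case: ifP => // gS.
  by rewrite (growing_act partA vA gS vS) eqxx in S_v.
- move=> a b aA bA ab; rewrite dual_load_y_at.
  have [act_ab|act_ab] := eqVneq (st_act s a) (st_act s b).
    rewrite big1 ?mulr0 ?addr0 ?edge // => S /andP[_ sep]; case: ifP => // gS.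
    move: sep; case aS: (a \in S); case bS: (b \in S) => //= _.
      by move: bS; rewrite (growing_act partA aA gS aS) act_ab (mem_act partA).
    by move: aS; rewrite (growing_act partA bA gS bS) -act_ab (mem_act partA).
  apply: affine_le_of_no_crossing => //; first exact: edge.
    by apply: sumr_ge0 => S _; case: ifP.
  move=> t' le_st' lt_t't; apply/eqP => tight; apply: (no_tight t' le_st' lt_t't).
  by exists a, b; split => //; rewrite dual_load_y_at.
Qed.

Lemma gd_reach_invariant s : gd_reach dist pos atime sgn s -> gd_invariant s.
Proof.
elim=> {s}.
- exact: gd_invariant_init.
- by move=> s u _ inv_s _ uA time_u; apply: gd_invariant_arrive.
- by move=> s u v _ inv_s _ uA vA _ _ _; apply: gd_invariant_merge.
- by move=> s u v _ inv_s *; apply: gd_invariant_match.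
- by move=> s t _ inv_s _ lt_st _ no_tight; apply: gd_invariant_grow.
Qed.

End GreedyDualInvariant.

Theorem lemma3 (R : realFieldType) (X : Type) (dist : X -> X -> R) (m : nat)
    (pos : 'I_(2 * m) -> X) (atime : 'I_(2 * m) -> R) (sgn : 'I_(2 * m) -> int) :
  is_metric dist -> valid_instance atime sgn ->
  forall s : gd_state R (2 * m), gd_reach dist pos atime sgn s ->
    (forall S : {set 'I_(2 * m)}, S \subset st_arr s -> 0 <= st_y s S) /\
    (forall u v, u \in st_arr s -> v \in st_arr s -> is_edge sgn u v ->
       dual_load (st_arr s) (st_y s) u v <= cost dist pos atime u v).
Proof.
move=> [dist_ge0 _] _ s reach_s.
have [_ _ y_ge0 _ edge] := @gd_reach_invariant _ _ _ _ pos atime sgn dist_ge0 s reach_s.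
by split=> // S _; apply: y_ge0.
Qed.
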